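(* Let $\mathcal{A}$ be an $N$-dimensional real associative unital algebra generated by $\varepsilon$, i.e. every $z\in\mathcal{A}$ has the form $z=x_1+x_2\varepsilon+\cdots+x_N\varepsilon^{N-1}$ with $x_1,\dots,x_N\in\mathbb{R}$. Then there exist unique functions $f_1,\dots,f_N:\mathbb{R}\to\mathbb{R}$ such that $e^{\varepsilon t}=f_1(t)+\varepsilon f_2(t)+\cdots+\varepsilon^{N-1}f_N(t)$ for all $t\in\mathbb{R}$. Moreover, for each $i$ there exist real constants $c_{ij}$ with $f_i(t)=\sum_{j=0}^\infty c_{ij}t^j$ for all $t\in\mathbb{R}$ (so each $f_i$ is entire on $\mathbb{R}$), and each $f_i$ extends uniquely to an entire function on $\mathcal{A}$, namely $f_i(z)=\sum_{j=0}^\infty c_{ij}z^j$ for $z\in\mathcal{A}$.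
   Context: The exponential on $\mathcal{A}$ is $e^z=\sum_{n\ge0}z^n/n!$. A function $g:\mathcal{A}\to\mathcal{A}$ is entire if it can be written as a power series $\sum_n b_n z^n$ with $b_n\in\mathcal{A}$ converging for all $z\in\mathcal{A}$. $\mathbb{R}$ is identified with $\mathbb{R}\cdot 1\subseteq\mathcal{A}$; an extension of a real function $f$ is a function on $\mathcal{A}$ whose restriction to $\mathbb{R}$ is $f$. Convergence in $\mathcal{A}$ is with respect to any norm on the finite-dimensional space $\mathcal{A}$. *)

(* a finite-dimensional real algebra is an [falgType R]
   over an abstract [R : realType]; convergence of sequences in the algebra is
   taken with respect to coordinates in a basis (sup-norm of coordinates). *)
From HB Require Import structures.
From mathcomp Require Import all_boot all_order all_algebra.
From mathcomp Require Import falgebra.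
From mathcomp Require Import all_classical all_reals all_analysis.
Set Implicit Arguments. Unset Strict Implicit. Unset Printing Implicit Defensive.
Import Order.TTheory GRing.Theory Num.Theory.
Import numFieldNormedType.Exports.
Local Open Scope classical_set_scope.
Local Open Scope ring_scope.

(* Convergence of a sequence in a finite-dimensional algebra A:
   every coordinate in the canonical basis [vbasis {:A}] converges.
   (All norms on a finite-dimensional space are equivalent, so this is
   convergence with respect to any norm.) *)
Definition Acvg (R : realType) (A : falgType R) (u : nat -> A) (l : A) : Prop :=
  forall i : 'I_(\dim (fullv : {vspace A})),
    (fun n => (coord (vbasis (fullv : {vspace A})) i (u n) : R)) @ \oo -->
      (coord (vbasis (fullv : {vspace A})) i l : R).

Definition Asums (R : realType) (A : falgType R) (a : nat -> A) (s : A) : Prop :=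
  Acvg (fun n => \sum_(0 <= k < n) a k) s.

Definition Rsums (R : realType) (a : nat -> R) (s : R) : Prop :=
  (fun n => \sum_(0 <= k < n) a k) @ \oo --> s.

Definition Aexp_eq (R : realType) (A : falgType R) (z s : A) : Prop :=
  Asums (fun n => (n`!%:R)^-1 *: z ^+ n) s.

Definition Aentire_with (R : realType) (A : falgType R) (b : nat -> A) (g : A -> A) : Prop :=
  forall z : A, Asums (fun n => b n * z ^+ n) (g z).

(* The coordinates of z^p in a basis of A grow at most geometrically in p,
   because multiplication is bilinear on a finite-dimensional space.  Hence
   every series sum_p c_p z^p with real coefficients |c_p| <= C K^p / p!
   converges coordinatewise in A.  This yields e^(t eps); written in the basis
   1, eps, ..., eps^(N-1) it gives f_i(t) = sum_p c_ip t^p, where c_ip is the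
   i-th coordinate of eps^p divided by p!, and F_i(z) = sum_p c_ip z^p is an
   entire extension.  The f_i are unique because limits and coordinates are.
   For the extension, an entire g = sum_p b_p z^p agreeing with f_i on the
   reals has, coordinate by coordinate, a real power series equal to that of
   F_i on the whole line, so b_p = c_ip by the identity theorem for real power
   series. *)

From HB Require Import structures.
From mathcomp Require Import all_boot all_order all_algebra.
From mathcomp Require Import falgebra.
From mathcomp Require Import all_classical all_reals all_analysis.
From mathcomp Require Import ring lra.
Import Order.TTheory GRing.Theory Num.Theory.
Import numFieldNormedType.Exports.
Local Open Scope classical_set_scope.
Local Open Scope ring_scope.

Lemma cvg_sum {K : numFieldType} {V : normedModType K} {T : Type}
    {F : set_system T} {FF : Filter F} (I : Type) (r : seq I)
    (f : I -> T -> V) (l : I -> V) :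
  (forall i, f i @ F --> l i) ->
  (fun x => \sum_(i <- r) f i x) @ F --> \sum_(i <- r) l i.
Proof.
move=> fl; elim: r => [|i r IH].
  by under eq_fun do rewrite big_nil; rewrite big_nil; exact: cvg_cst.
by under eq_fun do rewrite big_cons; rewrite big_cons; exact: cvgD.
Qed.

Lemma is_cvg_series_exp_dominated {R : realType} (a : nat -> R) (C K : R) :
  0 <= K -> (forall p, `|a p| <= C * exp_coeff K p) -> cvgn (series a).
Proof.
move=> K0 aC; have C0 : 0 <= C.
  have := aC 0%N; rewrite /exp_coeff /= expr0 fact0 divr1 mulr1.
  exact: le_trans.
apply: normed_cvg; apply: (series_le_cvg _ _ aC) => [p|p|] /=.
- exact: normr_ge0.
- by rewrite mulr_ge0 ?exp_coeff_ge0.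
exact: is_cvg_seriesZ (is_cvg_series_exp_coeff K).
Qed.

Section PowerSeriesCoefficients.
Context {R : realType}.
Implicit Types (d : nat -> R) (t : R).

Lemma powser_tail_le d (M : R) t p n :
  0 <= M -> 0 < t < 1 -> (forall j, `|d j| <= M) ->
  `|\sum_(p <= j < p + n) d j * t ^+ j| <= M * t ^+ p / (1 - t).
Proof.
move=> M0 /andP[t0 t1] dM; apply: le_trans (ler_norm_sum _ _ _) _.
apply: (@le_trans _ _ (M * \sum_(p <= j < p + n) t ^+ j)).
  rewrite mulr_sumr; apply: ler_sum => j _.
  by rewrite normrM normrX (ger0_norm (ltW t0)) ler_pM2r ?exprn_gt0.
rewrite -mulrA ler_wpM2l // (geometric_partial_tail n p t).
by apply: geometric_le_lim; rewrite ?exprn_ge0 ?ltW ?gtr0_norm.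
Qed.

Lemma cvg_series_bounded_norm (u : nat -> R) :
  cvgn (series u) -> exists2 M : R, 0 <= M & forall j, `|u j| <= M.
Proof.
have PF : ProperFilter (globally [set: nat]) := @globally_properfilter _ _ 0%N I.
move=> /cvg_series_bounded/ex_bound[M uM]; exists (Num.max M 0).
  by rewrite le_max lexx orbT.
by move=> j; rewrite le_max (uM j I).
Qed.

Lemma powser_lowest_coef_le d (M : R) t p :
  0 <= M -> (forall j, `|d j| <= M) -> (forall j, (j < p)%N -> d j = 0) ->
  0 < t < 1 -> series (fun j => d j * t ^+ j) @ \oo --> 0 ->
  `|d p| * (1 - t) <= M * t.
Proof.
move=> M0 dM d_lt_p t01 S0; have t0 : 0 < t by case/andP: t01.
have seriesE k : series (fun j => d j * t ^+ j) (k + p.+1)%N =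
    d p * t ^+ p + \sum_(p.+1 <= j < p.+1 + k) d j * t ^+ j.
  rewrite /series /= addnC (@big_cat_nat _ _ _ p.+1) ?leq_addr //= big_nat_recr //=.
  rewrite big_nat_cond big1 ?add0r // => j /andP[/andP[_ /d_lt_p ->] _].
  exact: mul0r.
(* Past the vanishing coefficients the partial sums are d p * t ^+ p plus a
   tail of size O(t ^+ p.+1). *)
have tail_cvg : (fun k => \sum_(p.+1 <= j < p.+1 + k) d j * t ^+ j) @ \oo -->
    - (d p * t ^+ p).
  have -> : (fun k => \sum_(p.+1 <= j < p.+1 + k) d j * t ^+ j) =
      (fun k => - (d p * t ^+ p) + series (fun j => d j * t ^+ j) (k + p.+1)%N).
    by apply/funext => k; rewrite seriesE addKr.
  rewrite -[X in _ --> X]addr0; apply: cvgD; first exact: cvg_cst.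
  by rewrite (cvg_shiftn p.+1).
have : `|d p * t ^+ p| <= M * t ^+ p.+1 / (1 - t).
  rewrite -normrN; apply: cvgr_to_le (cvg_norm tail_cvg) _.
  by apply: nearW => k; apply: powser_tail_le.
rewrite ler_pdivlMr ?subr_gt0; last by case/andP: t01.
rewrite normrM normrX (ger0_norm (ltW t0)) exprS mulrAC mulrA.
by rewrite ler_pM2r ?exprn_gt0.
Qed.

Lemma powser_coef_eq0 d :
  (forall t, series (fun j => d j * t ^+ j) @ \oo --> 0) -> forall p, d p = 0.
Proof.
move=> S0; have [M M0 dM] := cvg_series_bounded_norm _ (cvgP _ (S0 1)).
have {}dM j : `|d j| <= M by have := dM j; rewrite expr1n mulr1.
elim/ltn_ind => p IH.
apply/normr0_eq0/le_anti; rewrite normr_ge0 andbT leNgt; apply/negP => dp0.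
(* This t makes M * t < |d p| * (1 - t), contradicting powser_lowest_coef_le. *)
pose t := `|d p| / (2 * (`|d p| + M)).
have den0 : 0 < 2 * (`|d p| + M) by lra.
have tE : t * (2 * (`|d p| + M)) = `|d p| by rewrite divfK // gt_eqF.
have t0 : 0 < t by rewrite divr_gt0.
have t01 : 0 < t < 1 by rewrite t0 /=; nra.
have := powser_lowest_coef_le _ _ _ _ M0 dM IH t01 (S0 t); nra.
Qed.

End PowerSeriesCoefficients.

Section Coordinates.
Context {R : realType} {A : falgType R}.
Local Notation n := (\dim (fullv : {vspace A})).
Local Notation B := (vbasis (fullv : {vspace A})).
Implicit Types (u a : nat -> A) (z w l s : A).

Lemma coord_vbasisE {m} (Y : m.-tuple A) j z :
  coord Y j z = \sum_k coord B k z * coord Y j B`_k.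
Proof.
rewrite {1}(coord_vbasis (memvf z)) linear_sum; apply: eq_bigr => k _.
by rewrite linearZ.
Qed.

Lemma coord_vbasis_inj z w : (forall k, coord B k z = coord B k w) -> z = w.
Proof.
move=> zw; rewrite (coord_vbasis (memvf z)) (coord_vbasis (memvf w)).
by apply: eq_bigr => k _; rewrite zw.
Qed.

Lemma Acvg_coord {m} (Y : m.-tuple A) j {u l} :
  Acvg u l -> (fun p => coord Y j (u p)) @ \oo --> coord Y j l.
Proof.
move=> ul; rewrite coord_vbasisE.
under eq_fun do rewrite coord_vbasisE.
by apply: cvg_sum => k; apply: cvgMr_tmp; exact: ul.
Qed.

Lemma Acvg_unique {u l l'} : Acvg u l -> Acvg u l' -> l = l'.
Proof.
by move=> ul ul'; apply: coord_vbasis_inj => k; exact: cvg_unique (ul k) (ul' k).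
Qed.

Lemma Asums_coord {m} (Y : m.-tuple A) j {a s} :
  Asums a s -> series (fun p => coord Y j (a p)) @ \oo --> coord Y j s.
Proof. by move=> /(Acvg_coord Y j); under eq_fun do rewrite linear_sum. Qed.

Lemma Asums_alg_powers (c : nat -> R) (t s : R) :
  Rsums (fun p => c p * t ^+ p) s ->
  Asums (A := A) (fun p => (c p)%:A * t%:A ^+ p) s%:A.
Proof.
move=> cs; have -> : (fun p => (c p)%:A * t%:A ^+ p) =
    (fun p => (c p * t ^+ p)%:A :> A).
  by apply/funext => p; rewrite exprZn expr1n -scalerAl mul1r scalerA.
move=> k; under eq_fun do rewrite -scaler_suml linearZ.
by rewrite linearZ; apply: cvgMr_tmp.
Qed.

Definition Alim u : A := \sum_k lim (coord B k (u p) @[p --> \oo]) *: B`_k.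

Lemma Acvg_Alim u : (forall k, cvgn (fun p => coord B k (u p))) -> Acvg u (Alim u).
Proof. by move=> u_cvg k; rewrite coord_sum_free ?(basis_free (vbasisP _)). Qed.

Definition Asum a : A := Alim (series a).

Lemma Asums_Asum a :
  (forall k, cvgn (series (fun p => coord B k (a p)))) -> Asums a (Asum a).
Proof.
move=> a_cvg; apply: Acvg_Alim => k.
by under eq_fun do rewrite linear_sum; exact: a_cvg.
Qed.

Definition cnorm z : R := \sum_k `|coord B k z|.

Lemma cnorm_ge0 z : 0 <= cnorm z.
Proof. exact: sumr_ge0. Qed.

Lemma coord_le_cnorm k z : `|coord B k z| <= cnorm z.
Proof. by rewrite /cnorm (bigD1 k) //= lerDl sumr_ge0. Qed.

Lemma cnormZ (c : R) z : cnorm (c *: z) = `|c| * cnorm z.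
Proof. by rewrite /cnorm mulr_sumr; apply: eq_bigr => k _; rewrite linearZ normrM. Qed.

Lemma cnorm_sum (I : Type) (r : seq I) (F : I -> A) :
  cnorm (\sum_(i <- r) F i) <= \sum_(i <- r) cnorm (F i).
Proof.
rewrite /cnorm exchange_big /=; apply: ler_sum => k _.
by rewrite linear_sum; exact: ler_norm_sum.
Qed.

Lemma coord_tuple_le_cnorm {m} (Y : m.-tuple A) j z :
  `|coord Y j z| <= (\sum_(k < n) `|coord Y j B`_k|) * cnorm z.
Proof.
rewrite coord_vbasisE mulr_suml; apply: le_trans (ler_norm_sum _ _ _) _.
by apply: ler_sum => k _; rewrite normrM mulrC ler_wpM2l // coord_le_cnorm.
Qed.

Definition cnorm_mul : R := \sum_(k < n) \sum_(l < n) cnorm (B`_k * B`_l).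

Lemma cnorm_mul_ge0 : 0 <= cnorm_mul.
Proof. by do 2 apply: sumr_ge0 => ? _; exact: cnorm_ge0. Qed.

Lemma cnormM z w : cnorm (z * w) <= cnorm_mul * cnorm z * cnorm w.
Proof.
rewrite {1}(coord_vbasis (memvf z)) {1}(coord_vbasis (memvf w)) mulr_suml.
apply: le_trans; first exact: cnorm_sum.
rewrite /cnorm_mul !mulr_suml.
apply: ler_sum => k _; rewrite mulr_sumr; apply: le_trans; first exact: cnorm_sum.
rewrite !mulr_suml; apply: ler_sum => l _.
rewrite -scalerAl -scalerAr scalerA cnormZ normrM mulrC -mulrA.
by rewrite ler_wpM2l ?cnorm_ge0 // ler_pM ?coord_le_cnorm.
Qed.

Lemma cnormX z p : cnorm (z ^+ p) <= cnorm 1 * (cnorm_mul * cnorm z) ^+ p.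
Proof.
elim: p => [|p IH]; first by rewrite expr0 mulr1.
rewrite exprSr; apply: le_trans; first exact: cnormM.
apply: le_trans (ler_wpM2r (cnorm_ge0 z) (ler_wpM2l cnorm_mul_ge0 IH)) _.
by rewrite exprSr; lra.
Qed.

Lemma coord_exprn_le {m} (Y : m.-tuple A) j z :
  exists C K : R, [/\ 0 <= C, 0 <= K & forall p, `|coord Y j (z ^+ p)| <= C * K ^+ p].
Proof.
exists ((\sum_(k < n) `|coord Y j B`_k|) * cnorm 1), (cnorm_mul * cnorm z).
split=> [||p]; rewrite ?mulr_ge0 ?cnorm_ge0 ?cnorm_mul_ge0 ?sumr_ge0 //.
apply: le_trans; first exact: coord_tuple_le_cnorm.
by rewrite -mulrA ler_wpM2l ?sumr_ge0 // cnormX.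
Qed.

Lemma Asums_scaled_powers (c : nat -> R) (C K : R) z :
  0 <= K -> (forall p, `|c p| <= C * exp_coeff K p) ->
  Asums (fun p => c p *: z ^+ p) (Asum (fun p => c p *: z ^+ p)).
Proof.
move=> K0 cC; apply: Asums_Asum => k.
have [C' [K' [C'0 K'0 zC']]] := coord_exprn_le B k z.
apply: (@is_cvg_series_exp_dominated _ _ (C * C') (K * K')); first exact: mulr_ge0.
move=> p; rewrite linearZ normrM.
apply: le_trans (ler_pM (normr_ge0 _) (normr_ge0 _) (cC p) (zC' p)) _.
by rewrite /exp_coeff /= exprMn; lra.
Qed.

Lemma Apowser_coef_unique (b b' : nat -> A) (g : R -> A) :
  (forall t : R, Asums (fun p => b p * t%:A ^+ p) (g t)) ->
  (forall t : R, Asums (fun p => b' p * t%:A ^+ p) (g t)) -> b = b'.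
Proof.
move=> bg b'g; apply/funext => p; apply: coord_vbasis_inj => k; apply/eqP.
rewrite -subr_eq0; apply/eqP; move: p; apply: powser_coef_eq0 => t.
have coordE (c : nat -> A) j : coord B k (c j * t%:A ^+ j) = coord B k (c j) * t ^+ j.
  by rewrite exprZn expr1n mulr_algr linearZ mulrC.
have -> : series (fun j => (coord B k (b j) - coord B k (b' j)) * t ^+ j) =
    series (fun j => coord B k (b j * t%:A ^+ j)) -
    series (fun j => coord B k (b' j * t%:A ^+ j)).
  apply/funext => n; rewrite !fctE /series /= -sumrB.
  by apply: eq_bigr => j _; rewrite !coordE mulrBl.
have := cvgB (Asums_coord B k (bg t)) (Asums_coord B k (b'g t)); rewrite subrr; apply.
Qed.

Definition Aexp z : A := Asum (fun p => (p`!%:R)^-1 *: z ^+ p).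

Lemma Aexp_eq_Aexp z : Aexp_eq z (Aexp z).
Proof.
apply: (@Asums_scaled_powers _ 1 1) => // p.
by rewrite /exp_coeff /= expr1n mul1r div1r ger0_norm ?invr_ge0.
Qed.

Lemma Aentire_with_Asum (c : nat -> R) (C K : R) :
  0 <= K -> (forall p, `|c p| <= C * exp_coeff K p) ->
  Aentire_with (fun p => (c p)%:A) (fun z => Asum (fun p => c p *: z ^+ p)).
Proof.
move=> K0 cC z; rewrite /Aentire_with.
have -> : (fun p => (c p)%:A * z ^+ p) = (fun p => c p *: z ^+ p).
  by apply/funext => p; rewrite mulr_algl.
exact: Asums_scaled_powers K0 cC.
Qed.

Lemma coord_exprn_div_fact_le {m} (Y : m.-tuple A) j z :
  exists C K : R,
    0 <= K /\ forall p, `|coord Y j (z ^+ p) / p`!%:R| <= C * exp_coeff K p.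
Proof.
have [C [K [_ K0 zCK]]] := coord_exprn_le Y j z; exists C, K; split=> // p.
rewrite normrM normfV (ger0_norm (ler0n _ _)) /exp_coeff /= mulrA.
by rewrite ler_wpM2r ?invr_ge0.
Qed.

Lemma Rsums_coord_Aexp {m} (Y : m.-tuple A) j z (t : R) :
  Rsums (fun p => coord Y j (z ^+ p) / p`!%:R * t ^+ p) (coord Y j (Aexp (t *: z))).
Proof.
have -> : (fun p => coord Y j (z ^+ p) / p`!%:R * t ^+ p) =
    (fun p => coord Y j ((p`!%:R)^-1 *: (t *: z) ^+ p)).
  by apply/funext => p; rewrite exprZn !linearZ /=; ring.
exact: (Asums_coord Y j (Aexp_eq_Aexp (t *: z))).
Qed.

End Coordinates.

Section PowerBasis.
Context {R : realType} {A : falgType R} {N : nat} (eps : A).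
Hypothesis gen : forall z : A, exists x : 'I_N -> R, z = \sum_(i < N) x i *: eps ^+ i.

Definition powers : N.-tuple A := [tuple eps ^+ i | i < N].

Lemma nth_powers (i : 'I_N) : powers`_i = eps ^+ i.
Proof. by rewrite -tnth_nth tnth_mktuple. Qed.

Lemma memv_span_powers z : z \in <<powers>>%VS.
Proof.
have [x ->] := gen z; apply: memv_suml => i _; apply: memvZ.
by rewrite -nth_powers memv_span // mem_nth // size_tuple.
Qed.

Lemma sum_coord_powers z : \sum_(i < N) coord powers i z *: eps ^+ i = z.
Proof.
rewrite {2}(coord_span (memv_span_powers z)).
by apply: eq_bigr => i _; rewrite nth_powers.
Qed.

Lemma free_powers : \dim {:A} = N -> free powers.
Proof.
move=> dimN; suff span_full : <<powers>>%VS = fullv.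
  by rewrite /free span_full dimN size_tuple.
by apply/vspaceP => z; rewrite memv_span_powers memvf.
Qed.

Lemma coord_sum_powers : \dim {:A} = N ->
  forall (x : 'I_N -> R) j, coord powers j (\sum_(i < N) x i *: eps ^+ i) = x j.
Proof.
move=> /free_powers free_pw x j; rewrite -(coord_sum_free x j free_pw).
by congr (coord _ _ _); apply: eq_bigr => i _; rewrite nth_powers.
Qed.

End PowerBasis.

Theorem theorem7p3 (R : realType) (A : falgType R) (N : nat) (eps : A)
  (hdim : \dim (fullv : {vspace A}) = N)
  (hgen : forall z : A, exists x : 'I_N -> R, z = \sum_(i < N) x i *: eps ^+ i) :
  exists f : 'I_N -> R -> R,
    [/\ (forall t : R, Aexp_eq (t *: eps) (\sum_(i < N) f i t *: eps ^+ i)),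
        (forall g : 'I_N -> R -> R,
           (forall t : R, Aexp_eq (t *: eps) (\sum_(i < N) g i t *: eps ^+ i)) ->
           forall i t, g i t = f i t)
      & forall i : 'I_N, exists c : nat -> R,
          (forall t : R, Rsums (fun j => c j * t ^+ j) (f i t)) /\
          exists F : A -> A,
            [/\ Aentire_with (fun j => (c j)%:A) F,
                (forall t : R, F (t%:A) = (f i t)%:A)
              & forall (b : nat -> A) (g : A -> A),
                  Aentire_with b g ->
                  (forall t : R, g (t%:A) = (f i t)%:A) ->
                  forall z : A, g z = F z]].
Proof.
pose X : N.-tuple A := powers eps.
pose f i t := coord X i (Aexp (t *: eps)).
have expE t : \sum_(i < N) f i t *: eps ^+ i = Aexp (t *: eps).
  exact: sum_coord_powers hgen _.
exists f; split.
- by move=> t; rewrite expE; exact: Aexp_eq_Aexp.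
- move=> g gexp i t.
  by rewrite /f -(Acvg_unique (gexp t) (Aexp_eq_Aexp _)) coord_sum_powers.
move=> i; pose c p := coord X i (eps ^+ p) / p`!%:R; exists c.
have cf t : Rsums (fun p => c p * t ^+ p) (f i t) := Rsums_coord_Aexp X i eps t.
have [C [K [K0 cC]]] := coord_exprn_div_fact_le X i eps.
pose F (z : A) := Asum (fun p => c p *: z ^+ p).
have Fentire : Aentire_with (fun p => (c p)%:A) F by exact: Aentire_with_Asum K0 cC.
have Freal t : Asums (A := A) (fun p => (c p)%:A * t%:A ^+ p) (f i t)%:A.
  exact: Asums_alg_powers (cf t).
split=> //; exists F; split=> //.
- by move=> t; exact: Acvg_unique (Fentire t%:A) (Freal t).
- move=> b g gentire gf z.
  have bc : b = (fun p => (c p)%:A).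
    apply: (Apowser_coef_unique _ _ (fun t => (f i t)%:A)) => // t.
    by rewrite -gf; exact: gentire.
  by rewrite bc in gentire; exact: Acvg_unique (gentire z) (Fentire z).
Qed.
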